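(* Fix constants $0\le\gamma\le\delta\le1$. Let $p_e(n;\gamma,\delta)$ be the probability that $1$ is contained in a cycle of length between $\gamma n$ and $\delta n$ of a permutation chosen uniformly at random from all permutations of $[n]$ with all cycle lengths even. Then $\lim_{n\to\infty}p_e(n;\gamma,\delta)=\sqrt{1-\gamma}-\sqrt{1-\delta}$, where the limit is taken through even $n$. *)

From HB Require Import structures.
From mathcomp Require Import all_boot all_order all_algebra all_fingroup.
From mathcomp Require Import all_classical all_reals topology normedtype sequences.
Set Implicit Arguments. Unset Strict Implicit. Unset Printing Implicit Defensive.
Import Order.TTheory GRing.Theory Num.Theory.
Local Open Scope ring_scope.

Definition all_cycles_even (n : nat) (s : 'S_n) : bool :=
  [forall x : 'I_n, ~~ odd #|porbit s x|].

(* p_e(n; gamma, delta): among permutations of [n] = {0,...,n-1} (element 1 of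
   the paper is ord0 here) with all cycles even, the proportion for which the
   cycle containing ord0 has length L with gamma*n <= L <= delta*n.
   For n = 0 we set it to 0 (irrelevant for the limit). *)
Definition p_e (R : realType) (gamma delta : R) (n : nat) : R :=
  match n with
  | 0 => 0
  | k.+1 =>
      (#|[pred s : 'S_(k.+1) | all_cycles_even s &&
            ((gamma * (k.+1)%:R <= (#|porbit s ord0|)%:R) &&
             ((#|porbit s ord0|)%:R <= delta * (k.+1)%:R))]|)%:R
      / (#|[pred s : 'S_(k.+1) | all_cycles_even s]|)%:R
  end.

From HB Require Import structures.
From mathcomp Require Import all_classical all_reals topology normedtype sequences.
From mathcomp Require Import all_boot all_order all_algebra all_fingroup.
From mathcomp Require Import ring lra zify.
Set Implicit Arguments. Unset Strict Implicit. Unset Printing Implicit Defensive.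
Import Order.TTheory GRing.Theory Num.Theory.

(* Let e(n) be the number of permutations of an n-set with only even cycles.
   Removing the successor of a point x from its cycle shows that x lies on a
   cycle of length L, all other cycles being even, in (n-1)^_(L-1) e(n-L)
   permutations; summing over even L gives e(k+2) = (k+1)^2 e(k).  With
   rho(j) = e(j)/j!, this turns p_e(n) into the sum of rho(j) / (n rho(n)) over
   (1-delta) n <= j <= (1-gamma) n.  The partial sums of rho are
   sum_(j <= 2I) rho(j) = (2I+1) rho(2I), and by the Wallis-type monotonicity of
   (2m+1) rho(2m)^2 (decreasing) and (4m+1) rho(2m)^2 (increasing), the partial
   sum up to N <= 2m divided by 2m rho(2m) is sqrt(N/2m) + O(m^-1/2). *)

Lemma card_partition_nat (U : finType) (P : pred U) (f : U -> nat) N :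
  (forall s, P s -> f s < N.+1) ->
  #|[pred s | P s]| = \sum_(L < N.+1) #|[pred s | P s && (f s == L)]|.
Proof.
move=> f_lt; rewrite -sum1_card.
rewrite (partition_big (fun s => (inord (f s) : 'I_N.+1)) predT) //=.
apply: eq_bigr => L _; rewrite -sum1_card; apply: eq_bigl => s; rewrite !inE.
by case Ps: (P s); rewrite //= -val_eqE /= inordK ?f_lt.
Qed.

Section PermOrbits.
Local Open Scope group_scope.
Variable T : finType.
Implicit Types (s t : {perm T}) (A : {set T}) (x y z w : T).

Lemma porbit_closed s x w : w \in porbit s x -> s w \in porbit s x.
Proof. by move=> /porbitP[i ->]; rewrite -permM -expgSr mem_porbit. Qed.

Lemma porbit_eq_on s t z : {in porbit s z, t =1 s} -> porbit t z = porbit s z.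
Proof.
move=> ts.
have tsX i : (t ^+ i) z = (s ^+ i) z.
  elim: i => [|i IH]; first by rewrite !expg0 !perm1.
  by rewrite !expgSr !permM IH ts ?mem_porbit.
by apply/setP => w; apply/porbitP/porbitP => -[i ->]; exists i; rewrite tsX.
Qed.

Lemma porbit_fix s x : s x = x -> porbit s x = [set x].
Proof.
move=> sx; apply/setP => w; rewrite inE; apply/porbitP/eqP => [[i ->]|->].
  by rewrite permX_fix.
by exists 0%N; rewrite expg0 perm1.
Qed.

Lemma card_porbit_eq1 s x : (#|porbit s x| == 1%N) = (s x == x).
Proof.
apply/eqP/eqP => [porbit1|sx]; last by rewrite porbit_fix ?cards1.
by have := iter_porbit s x; rewrite porbit1.
Qed.

Lemma porbit_sub_on A s x : perm_on A s -> x \in A -> porbit s x \subset A.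
Proof.
move=> sA xA; apply/subsetP => w /porbitP[i ->]; elim: i => [|i IH].
  by rewrite expg0 perm1.
by rewrite expgSr permM (perm_closed _ sA).
Qed.

Section CutCycle.
Variables (s : {perm T}) (x y : T).
Hypotheses (sxy : s x = y) (yx : y != x).

Let t := tperm x y * s.
Let tE w : t w = s (tperm x y w). Proof. by rewrite /t permM. Qed.
Let y_porbit : y \in porbit s x.
Proof. by rewrite -sxy porbit_closed ?porbit_id. Qed.

(* Composing with tperm x y short-circuits x -> y -> s y into x -> s y. *)
Lemma porbit_cut : porbit t x = porbit s x :\ y.
Proof.
apply/setP => w; apply/idP/idP.
- move=> /porbitP[i ->]; elim: i => [|i IH].
    by rewrite expg0 perm1 !inE eq_sym yx porbit_id.
  rewrite expgSr permM; move: IH; set u := (t ^+ i) x.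
  rewrite !inE => /andP[uy us]; rewrite tE.
  have [->|ux] := eqVneq u x.
    rewrite tpermL porbit_closed ?y_porbit // andbT.
    by rewrite -{2}sxy (inj_eq perm_inj).
  have -> : tperm x y u = u by apply: tpermD; rewrite eq_sym.
  by rewrite porbit_closed // andbT -sxy (inj_eq perm_inj).
- rewrite !inE => /andP[wy /porbitP[i wE]]; move: wy; rewrite {}wE.
  elim: i => [|i IH]; first by rewrite expg0 perm1 porbit_id.
  rewrite expgSr permM; set u := (s ^+ i) x => suy.
  have [uy|uy] := eqVneq u y.
    by rewrite -[s u]/(s u) uy -[y](tpermL x y) -tE porbit_closed ?porbit_id.
  have ux : u != x by apply: contraNneq suy => ->; rewrite sxy.
  have tu : tperm x y u = u by apply: tpermD; rewrite eq_sym.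
  by rewrite -tu -tE porbit_closed ?IH.
Qed.

Lemma porbit_cut_other z : z \notin porbit s x -> porbit t z = porbit s z.
Proof.
move=> zx; apply: porbit_eq_on => w wz.
have wx : w \notin porbit s x.
  have szw : porbit s w = porbit s z by apply/eqP; rewrite eq_porbit_mem.
  by apply: contra zx => wx; rewrite -eq_porbit_mem -szw eq_porbit_mem.
rewrite tE tpermD //; apply: contraNneq wx => <-; by rewrite ?porbit_id ?y_porbit.
Qed.

End CutCycle.
End PermOrbits.

Section EvenPermCount.
Local Open Scope group_scope.
Variable T : finType.
Implicit Types (s : {perm T}) (A : {set T}) (x y z : T).

Definition even_cycles_on A s := [forall z in A, ~~ odd #|porbit s z|].

Definition even_cycles_off A x s :=
  [forall z in A, (z \notin porbit s x) ==> ~~ odd #|porbit s z|].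

Definition n_evenperm A :=
  #|[pred s : {perm T} | perm_on A s && even_cycles_on A s]|.

Definition n_evenperm_at A x L :=
  #|[pred s : {perm T} | perm_on A s && (#|porbit s x| == L) && even_cycles_off A x s]|.

Lemma cut_cycle_at A x y L s : x \in A -> y \in A -> y != x -> 1 < L -> s x = y ->
  (perm_on A s && (#|porbit s x| == L) && even_cycles_off A x s) =
  (perm_on (A :\ y) (tperm x y * s) && (#|porbit (tperm x y * s) x| == L.-1)
    && even_cycles_off (A :\ y) x (tperm x y * s)).
Proof.
move=> xA yA yx L1 sxy; set t := tperm x y * s.
have tE w : t w = s (tperm x y w) by rewrite /t permM.
have tx := porbit_cut sxy yx; have tz := porbit_cut_other sxy.
rewrite -/t in tx tz.
have yO : y \in porbit s x by rewrite -sxy porbit_closed ?porbit_id.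
congr (_ && _); first congr (_ && _).
- apply/idP/idP => /subsetP sA; apply/subsetP => z; rewrite !inE => zz.
  + have [zy|zy] := eqVneq z y; first by move: zz; rewrite zy tE tpermR sxy eqxx.
    have [->|zx] := eqVneq z x; first by [].
    have tz1 : tperm x y z = z by apply: tpermD; rewrite eq_sym.
    by apply: sA; rewrite inE; move: zz; rewrite tE tz1.
  + have [->|zx] := eqVneq z x; first by [].
    have [->|zy] := eqVneq z y; first by [].
    have tz1 : tperm x y z = z by apply: tpermD; rewrite eq_sym.
    have : z \in A :\ y by apply: sA; rewrite inE tE tz1.
    by rewrite inE => /andP[].
- by rewrite tx (cardsD1 y (porbit s x)) yO add1n; case: L L1 => [|[|L]].
- apply/forallP/forallP => H z; have := H z; rewrite !inE.
  + have [zy|zy] := eqVneq z y => //= /implyP Hz; apply/implyP => zA.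
    apply/implyP; rewrite tx !inE zy /= => zO; rewrite tz //.
    by move: (Hz zA) => /implyP; apply.
  + move=> /implyP Hz; apply/implyP => zA; apply/implyP => zO.
    have [zy|zy] := eqVneq z y; first by rewrite zy yO in zO.
    rewrite -tz //; move: Hz; rewrite zy zA tx !inE zy /= => /(_ isT) /implyP.
    exact.
Qed.

Lemma n_evenperm_at_rec A x L : x \in A -> 1 < L ->
  n_evenperm_at A x L = \sum_(y in A :\ x) n_evenperm_at (A :\ y) x L.-1.
Proof.
move=> xA L1; rewrite /n_evenperm_at -sum1_card.
rewrite (partition_big (fun s : {perm T} => s x) (mem (A :\ x))) /=; last first.
  move=> s /andP[/andP[sA /eqP sL] _]; rewrite !inE (perm_closed _ sA) xA andbT.
  by rewrite -card_porbit_eq1 sL gtn_eqF.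
apply: eq_bigr => y; rewrite !inE => /andP[yx yA].
rewrite -sum1_card (reindex_inj (mulgI (tperm x y))) /=.
apply: eq_bigl => s; rewrite !inE.
have -> : (tperm x y * s) x = s y by rewrite permM tpermL.
have [syy|syy] := eqVneq (s y) y; last first.
  rewrite andbF; apply/esym/negbTE; rewrite negb_and; apply/orP; left.
  rewrite negb_and; apply/orP; left; apply/negP => /subsetP /(_ y).
  by rewrite !inE eqxx /=; move/(_ syy).
rewrite andbT (cut_cycle_at (L:=L) xA yA yx L1); last by rewrite permM tpermL.
by rewrite mulgA tperm2 mul1g.
Qed.

Lemma n_evenperm_at1 A x : x \in A -> n_evenperm_at A x 1%N = n_evenperm (A :\ x).
Proof.
move=> xA; apply: eq_card => s; rewrite !inE card_porbit_eq1.
have [sx|sx] /= := eqVneq (s x) x; last first.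
  rewrite andbF /=; apply/esym/negbTE; rewrite negb_and; apply/orP; left.
  by apply/negP => /subsetP /(_ x); rewrite !inE eqxx /=; move/(_ sx).
rewrite andbT /even_cycles_off porbit_fix //; congr (_ && _).
  apply/subsetP/subsetP => sA z; rewrite !inE => zz.
    apply/andP; split; last by apply: sA; rewrite inE.
    by apply: contraNneq zz => ->; rewrite sx.
  by have := sA z; rewrite !inE => /(_ zz) /andP[].
by apply/forallP/forallP => H z; have := H z; rewrite !inE;
  case: (z \in A); case: (z != x).
Qed.

Lemma n_evenperm_at0 A x : n_evenperm_at A x 0 = 0%N.
Proof.
by apply: eq_card0 => s; rewrite !inE (negbTE (card_porbit_neq0 s x)) andbF.
Qed.

Lemma n_evenperm_cycle A x L : x \in A ->
  #|[pred s : {perm T} | (perm_on A s && even_cycles_on A s) && (#|porbit s x| == L)]|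
  = ((~~ odd L) * n_evenperm_at A x L)%N.
Proof.
move=> xA; case oL: (odd L) => /=.
  rewrite mul0n; apply: eq_card0 => s; rewrite !inE.
  apply/negP => /andP[/andP[_ /forallP /(_ x)]]; rewrite xA /= => H /eqP sL.
  by move: H; rewrite sL oL.
rewrite mul1n; apply: eq_card => s; rewrite !inE.
case: (perm_on A s) => //=; case: eqP => [sL|]; rewrite ?andbF ?andbT //=.
apply/forallP/forallP => H z; have := H z.
  by case: (z \in A) => //= ->; rewrite implybT.
case zA: (z \in A) => //=; case zO: (z \in porbit s x) => //= _.
have -> : porbit s z = porbit s x by apply/eqP; rewrite eq_porbit_mem.
by rewrite sL oL.
Qed.

Lemma n_evenperm_split A x : x \in A ->
  n_evenperm A = \sum_(L < #|A|.+1) (~~ odd L) * n_evenperm_at A x L.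
Proof.
move=> xA; rewrite /n_evenperm (card_partition_nat (f := fun s => #|porbit s x|) (N := #|A|)).
  by apply: eq_bigr => L _; rewrite n_evenperm_cycle.
by move=> s /andP[sA _]; rewrite ltnS; apply: subset_leq_card (porbit_sub_on sA xA).
Qed.

Lemma n_evenperm0 : n_evenperm set0 = 1%N.
Proof.
rewrite -(card1 (1 : {perm T})); apply: eq_card => s; rewrite !inE.
apply/idP/eqP => [/andP[s0 _]|->]; first by apply: perm_on_id s0 _; rewrite cards0.
by rewrite perm_on1 /=; apply/forallP => z; rewrite inE.
Qed.

End EvenPermCount.

(* [eperm n] counts the permutations of [n] points with only even cycles
   (see [n_evenpermE]): it is [((n - 1)!!)^2] for even [n] and [0] for odd [n]. *)
Fixpoint eperm (n : nat) : nat :=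
  match n with 0 => 1 | 1 => 0 | k.+2 => k.+1 * k.+1 * eperm k end.

Lemma eperm_odd n : odd n -> eperm n = 0.
Proof.
suff H : forall n, (odd n -> eperm n = 0) /\ (odd n.+1 -> eperm n.+1 = 0) by case: (H n).
elim=> [|k [IH1 IH2]]; first by split.
by split=> // ok; rewrite /= IH1 ?muln0 //; move: ok; rewrite /= negbK.
Qed.

Lemma eperm_even_gt0 n : 0 < eperm (2 * n).
Proof. by elim: n => [|n IH] //; rewrite mulnS /= !muln_gt0. Qed.

(* The summand [L] counts the permutations of [k.+1] points with only even
   cycles in which a given point lies on a cycle of length [L.+1]. *)
Lemma eperm_sum k : \sum_(L < k.+1) odd L * (k ^_ L * eperm (k - L)) = eperm k.+1.
Proof.
suff H : forall k, \sum_(L < k.+1) odd L * (k ^_ L * eperm (k - L)) = eperm k.+1 /\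
    \sum_(L < k.+2) odd L * (k.+1 ^_ L * eperm (k.+1 - L)) = eperm k.+2 by case: (H k).
clear k; elim=> [|k [IHk IHk1]]; first by split; rewrite !big_ord_recl ?big_ord0.
split=> //; rewrite big_ord_recl big_ord_recl.
rewrite [X in _ + (_ + X)](_ : _ = k.+2 * k.+1 * eperm k.+1); last first.
  rewrite -IHk big_distrr; apply: eq_bigr => i _; rewrite !lift0.
  by rewrite !ffactnS /= !subSS negbK; ring.
rewrite (_ : odd ord0 = false) // mul0n add0n.
have -> : nat_of_ord (lift ord0 (@ord0 k.+1)) = 1 by [].
by rewrite ffactn1 subSS subn0 mul1n [eperm k.+3]/=; ring.
Qed.

Lemma n_evenperm_formulas (T : finType) n (A : {set T}) : #|A| = n ->
  n_evenperm A = eperm n /\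
  (forall x L, x \in A -> 0 < L <= n -> n_evenperm_at A x L = n.-1 ^_ L.-1 * eperm (n - L)).
Proof.
elim/ltn_ind: n A => -[|k] IH A cA.
  by rewrite (cards0_eq cA) n_evenperm0; split=> // x [|L].
have cAy y : y \in A -> #|A :\ y| = k.
  by move=> yA; move: cA; rewrite (cardsD1 y) yA add1n => -[].
have HG x L : x \in A -> 0 < L <= k.+1 ->
    n_evenperm_at A x L = k.+1.-1 ^_ L.-1 * eperm (k.+1 - L).
  case: L => [|[|L]] xA //= HL.
    by rewrite n_evenperm_at1 // ffactn0 mul1n subSS subn0; case: (IH k _ _ (cAy x xA)).
  rewrite n_evenperm_at_rec //= (eq_bigr (fun _ => k.-1 ^_ L * eperm (k - L.+1))).
    by rewrite sum_nat_const cAy // ffactnS subSS; ring.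
  move=> y; rewrite !inE => /andP[yx yA].
  by case: (IH k _ _ (cAy y yA)) => // _ ->; rewrite // !inE ?xA ?andbT // eq_sym.
split=> //.
have [x xA] : exists x, x \in A by apply/card_gt0P; rewrite cA.
rewrite (n_evenperm_split xA) cA big_ord_recl n_evenperm_at0 muln0 add0n -eperm_sum.
apply: eq_bigr => i _; rewrite lift0 HG ?ltn_ord //.
by rewrite /= subSS negbK.
Qed.

Lemma n_evenpermE (T : finType) (A : {set T}) : n_evenperm A = eperm #|A|.
Proof. by have [] := n_evenperm_formulas (erefl #|A|). Qed.

Lemma n_evenperm_atE (T : finType) (A : {set T}) x L : x \in A -> 0 < L <= #|A| ->
  n_evenperm_at A x L = #|A|.-1 ^_ L.-1 * eperm (#|A| - L).
Proof. by have [_] := n_evenperm_formulas (erefl #|A|); apply. Qed.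

Lemma all_cycles_evenE n (s : 'S_n) : all_cycles_even s = even_cycles_on [set: 'I_n] s.
Proof. by apply: eq_forallb => z; rewrite in_setT. Qed.

Lemma perm_on_setT n (s : 'S_n) : perm_on [set: 'I_n] s.
Proof. by apply/subsetP => z _; rewrite in_setT. Qed.

Lemma card_all_cycles_even n : #|[pred s : 'S_n | all_cycles_even s]| = eperm n.
Proof.
rewrite -[n in eperm n]card_ord -cardsT -n_evenpermE.
by apply: eq_card => s; rewrite !inE perm_on_setT all_cycles_evenE.
Qed.

Lemma card_all_cycles_even_ord0 k (cnd : pred nat) :
  #|[pred s : 'S_k.+1 | all_cycles_even s && cnd #|porbit s ord0|]| =
  (\sum_(i < k.+1) cnd i.+1 * (odd i * (k ^_ i * eperm (k - i))))%N.
Proof.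
rewrite (card_partition_nat (f := fun s : 'S_k.+1 => #|porbit s ord0|) (N := k.+1)); last first.
  by move=> s _; rewrite ltnS (leq_trans (max_card _)) ?card_ord.
rewrite big_ord_recl [X in (X + _)%N]eq_card0 ?add0n => [|s]; last first.
  by rewrite !inE (negbTE (card_porbit_neq0 s ord0)) andbF.
apply: eq_bigr => i _; rewrite lift0 /=.
have -> : (k ^_ i * eperm (k - i))%N = n_evenperm_at [set: 'I_k.+1] ord0 i.+1.
  by rewrite n_evenperm_atE ?in_setT //; rewrite cardsT card_ord //= ltnS ltn_ord.
rewrite -[odd i]negbK -oddS -n_evenperm_cycle ?in_setT //.
case ci: (cnd i.+1); last first.
  by apply: eq_card0 => s; rewrite !inE; case: eqP => [->|]; rewrite ?ci andbF.
rewrite mul1n; apply: eq_card => s; rewrite !inE perm_on_setT all_cycles_evenE.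
by case: eqP => [->|]; rewrite ?ci ?andbF ?andbT.
Qed.

Local Open Scope ring_scope.

Lemma sqrtr_dist_le (R : rcfType) (p q : R) : 0 <= p -> 0 <= q ->
  `|Num.sqrt p - Num.sqrt q| <= Num.sqrt `|p - q|.
Proof.
wlog qp : p q / q <= p => [WLOG p0 q0|p0 q0].
  by case: (leP q p) => [/WLOG|/ltW /WLOG]; last rewrite distrC (distrC p); apply.
rewrite [`|p - q|]ger0_norm ?subr_ge0 //.
have := sqrtr_ge0 p; have := sqrtr_ge0 q; have := sqrtr_ge0 (p - q).
have := sqr_sqrtr p0; have := sqr_sqrtr q0.
have : Num.sqrt (p - q) ^+ 2 = p - q by rewrite sqr_sqrtr // subr_ge0.
move: (Num.sqrt p) (Num.sqrt q) (Num.sqrt (p - q)) => u v d hd hv hu d0 v0 u0.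
by rewrite ler_norml; apply/andP; split; nra.
Qed.

Lemma natr_affine (R : nzSemiRingType) p q n :
  (p * n + q)%N%:R = p%:R * n%:R + q%:R :> R.
Proof. by rewrite natrD natrM. Qed.

Section EvenPermDensity.
Variable R : rcfType.

Definition peven (j : nat) : R := (eperm j)%:R / (j`!)%:R.

(* [wallis i] equals ['C(2i, i) / 4 ^ i]. *)
Definition wallis (i : nat) : R := peven (2 * i)%N.

Definition peven_sum (N : nat) : R := \sum_(j < N) peven j.

Lemma peven_ge0 j : 0 <= peven j.
Proof. by rewrite divr_ge0. Qed.

Lemma peven_odd i : peven (2 * i).+1 = 0.
Proof. by rewrite /peven eperm_odd ?mul0r // oddS oddM. Qed.

Lemma wallis_gt0 i : 0 < wallis i.
Proof. by rewrite divr_gt0 // ltr0n ?eperm_even_gt0 ?fact_gt0. Qed.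

Lemma wallisS i : wallis i.+1 = wallis i * (2 * i + 1)%N%:R / (2 * i + 2)%N%:R.
Proof.
rewrite /wallis /peven mulnS /= !factS !natrM.
have f0 : ((2 * i)`!)%:R != 0 :> R by rewrite pnatr_eq0 -lt0n fact_gt0.
have i0 : 0 <= i%:R :> R := ler0n _ _.
rewrite !addn1 !addn2 -!natr1 !natrM; field.
by rewrite f0 /=; apply/andP; split; apply/negP => /eqP; lra.
Qed.

Lemma peven_sum_double_odd I : peven_sum (2 * I).+1 = (2 * I + 1)%N%:R * wallis I.
Proof.
elim: I => [|I IH]; first by rewrite /peven_sum big_ord_recl big_ord0 addr0 mul1r.
have -> : (2 * I.+1).+1 = (2 * I).+3 by rewrite mulnS.
rewrite /peven_sum 2!big_ord_recr /= -/(peven_sum _) IH peven_odd addr0.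
have -> : (2 * I).+2 = (2 * I.+1)%N by rewrite mulnS.
rewrite -/(wallis I.+1) wallisS.
have i0 : 0 <= I%:R :> R := ler0n _ _.
rewrite !natrD !natrM; field.
by apply/negP => /eqP; lra.
Qed.

Lemma peven_sumS_half N : peven_sum N.+1 = (2 * N./2 + 1)%:R * wallis N./2.
Proof.
rewrite -peven_sum_double_odd; have := odd_double_half N.
case: (odd N) => /= NE; last by rewrite -{1}NE mul2n.
by rewrite -{1}NE add1n /peven_sum big_ord_recr /= -mul2n peven_odd addr0.
Qed.

Lemma wallis_ratio_bounds (n : R) : 0 <= n ->
  ((2 * n + 1) / (2 * n + 2)) ^+ 2 * (2 * n + 3) <= 2 * n + 1 /\
  4 * n + 1 <= ((2 * n + 1) / (2 * n + 2)) ^+ 2 * (4 * n + 5).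
Proof.
move=> n0; have h : 0 < 2 * n + 2 by lra.
rewrite expr_div_n; split.
  by rewrite mulrAC ler_pdivrMr ?exprn_gt0 //; nra.
by rewrite mulrAC ler_pdivlMr ?exprn_gt0 //; nra.
Qed.

Lemma wallis_sqr_decr : {homo (fun k => wallis k ^+ 2 * (2 * k + 1)%N%:R) :
  i m / (i <= m)%N >-> m <= i}.
Proof.
apply: homo_leq => [//|y x z xy yz|k]; first exact: le_trans yz xy.
have [step _] := wallis_ratio_bounds (ler0n R k).
have -> : (2 * k.+1 + 1 = 2 * k + 3)%N by lia.
rewrite wallisS; move: (wallis k) => w.
rewrite -mulrA exprMn -mulrA ler_wpM2l ?sqr_ge0 //.
by rewrite !natr_affine.
Qed.

Lemma wallis_sqr_incr : {homo (fun k => wallis k ^+ 2 * (4 * k + 1)%N%:R) :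
  i m / (i <= m)%N >-> i <= m}.
Proof.
apply: homo_leq => [//|y x z|k]; first exact: le_trans.
have [_ step] := wallis_ratio_bounds (ler0n R k).
have -> : (4 * k.+1 + 1 = 4 * k + 5)%N by lia.
rewrite wallisS; move: (wallis k) => w.
rewrite -mulrA exprMn -[X in _ <= X]mulrA ler_wpM2l ?sqr_ge0 //.
by rewrite !natr_affine.
Qed.

Lemma wallis_odd_sum_bounds I m (s t : R) : (I <= m)%N ->
  0 <= s <= (2 * I + 1)%N%:R -> 0 <= t ->
  2 * (2 * I + 1)%N%:R ^+ 2 <= t * (4 * I + 1)%N%:R ->
  s * (2 * m + 1)%N%:R * wallis m ^+ 2 <= ((2 * I + 1)%N%:R * wallis I) ^+ 2 /\
  2 * ((2 * I + 1)%N%:R * wallis I) ^+ 2 <= t * (4 * m + 1)%N%:R * wallis m ^+ 2.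
Proof.
move=> Im /andP[s0 s1] t0 ht.
have h1 := wallis_sqr_decr Im; have h2 := wallis_sqr_incr Im; move: h1 h2 ht s1 => /=.
set u := (2 * I + 1)%N%:R; set X := wallis I ^+ 2; set Y := wallis m ^+ 2.
have u0 : 0 <= u by []; have X0 : 0 <= X by rewrite sqr_ge0.
rewrite exprMn -/X => h1 h2 ht s1; split.
  by have := ler_wpM2l s0 h1; have := ler_wpM2r (mulr_ge0 X0 u0) s1; nra.
by have := ler_wpM2l t0 h2; have := ler_wpM2r X0 ht; nra.
Qed.

Lemma peven_sum_sqr_bounds m N : (N <= 2 * m)%N ->
  (N%:R - 1) * (2 * m + 1)%N%:R * wallis m ^+ 2 <= peven_sum N ^+ 2 /\
  2 * peven_sum N ^+ 2 <= (N%:R + 1) * (4 * m + 1)%N%:R * wallis m ^+ 2.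
Proof.
case: N => [_|N Nm].
  rewrite /peven_sum big_ord0 expr0n /= mulr0 sub0r !mulNr mul1r oppr_le0.
  split; first exact: mulr_ge0 (ler0n _ _) (sqr_ge0 _).
  by apply: mulr_ge0 (sqr_ge0 _); rewrite add0r mul1r.
have NE := odd_double_half N.
have I_m : (N./2 <= m)%N by case: (odd N) NE => /= NE; lia.
have NI : (2 * N./2 <= N <= 2 * N./2 + 1)%N by case: (odd N) NE => /= NE; lia.
move: NI; rewrite peven_sumS_half; set I := N./2 => NI.
have I_ge0 : 0 <= I%:R :> R := ler0n _ _.
rewrite -natr1 addrK; apply: wallis_odd_sum_bounds => //.
- by rewrite ler0n ler_nat; case/andP: NI.
- by rewrite !natr1.
have NI1 : 2 * I%:R <= N%:R :> R by rewrite -natrM ler_nat; case/andP: NI.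
by rewrite !natr_affine; nra.
Qed.

Lemma eperm_ffact_ratio k i : (i <= k)%N -> (0 < eperm k.+1)%N ->
  (k ^_ i * eperm (k - i))%:R / (eperm k.+1)%:R =
  peven (k - i) / (k.+1%:R * peven k.+1).
Proof.
move=> ik e_gt0; rewrite /peven factS -(ffact_fact ik) !natrM.
have f0 : (k - i)`!%:R != 0 :> R by rewrite pnatr_eq0 -lt0n fact_gt0.
have kf0 : (k ^_ i)%:R != 0 :> R.
  by have := fact_gt0 k; rewrite -(ffact_fact ik) muln_gt0 pnatr_eq0 -lt0n => /andP[].
have e0 : (eperm k.+1)%:R != 0 :> R by rewrite pnatr_eq0 -lt0n.
by field; rewrite f0 kf0 e0 andbT addrC natr1 pnatr_eq0.
Qed.

End EvenPermDensity.

Lemma peven_sum_ratio_close (R : rcfType) (c : R) m N : 0 <= c <= 1 -> (0 < m)%N ->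
  (N <= 2 * m)%N -> c * (2 * m)%:R <= N%:R <= c * (2 * m)%:R + 1 ->
  `|peven_sum R N / ((2 * m)%N%:R * wallis R m) - Num.sqrt c| <= Num.sqrt (2 / m%:R).
Proof.
move=> /andP[c0 c1] m0 Nm /andP[N1 N2]; rewrite natrM mulrCA mulrA in N1 N2.
have [H1 H2] := peven_sum_sqr_bounds R Nm.
have w0 := wallis_gt0 R m.
have m1 : 1 <= m%:R :> R by rewrite ler1n.
set w := peven_sum R N / _.
have w_ge0 : 0 <= w.
  by apply: divr_ge0 (mulr_ge0 (ler0n _ _) (ltW w0)); apply: sumr_ge0 => j _; apply: peven_ge0.
have -> : w = Num.sqrt (w ^+ 2) by rewrite sqrtr_sqr ger0_norm.
apply: le_trans (sqrtr_dist_le (sqr_ge0 _) c0) _.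
rewrite ler_sqrt ?divr_ge0 ?ler0n // /w expr_div_n exprMn natrM.
move: H1 H2 N1 N2; set S := peven_sum R N ^+ 2; set Y := wallis R m ^+ 2.
have Y0 : 0 < Y by rewrite exprn_gt0.
set M := m%:R; set Nr := N%:R; rewrite !natr_affine => H1 H2 N1 N2.
have S0 : 0 <= S by rewrite sqr_ge0.
have -> : S / ((2 * M) ^+ 2 * Y) - c = (S - 4 * c * M ^+ 2 * Y) / (4 * M ^+ 2 * Y).
  by field; apply/andP; split; apply/negP => /eqP; nra.
have D : 0 < 4 * M ^+ 2 * Y by rewrite mulr_gt0 // mulr_gt0 ?exprn_gt0 //; lra.
rewrite normrM (gtr0_norm (x := (_)^-1)) ?invr_gt0 // ler_pdivrMr //.
have -> : 2 / M * (4 * M ^+ 2 * Y) = 8 * M * Y by field; apply/negP => /eqP; lra.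
rewrite ler_norml; apply/andP; split.
  have : 0 <= (Nr - 1 - (2 * c * M - 1)) * (2 * M + 1) * Y.
    by apply: mulr_ge0 (ltW Y0); apply: mulr_ge0; lra.
  nra.
have : 0 <= (2 * c * M + 1 - Nr) * (4 * M + 1) * Y.
  by apply: mulr_ge0 (ltW Y0); apply: mulr_ge0; lra.
nra.
Qed.

Section DownwardClosedCount.
Variable P : pred nat.
Hypothesis P_down : forall i j, (i <= j)%N -> P j -> P i.

Lemma count_iota_le n : (count P (iota 0 n) <= n)%N.
Proof. by rewrite -[n in (_ <= n)%N](size_iota 0) count_size. Qed.

Lemma count_iota_down n j : (j < n)%N -> P j = (j < count P (iota 0 n))%N.
Proof.
elim: n => // n IH; have -> : iota 0 n.+1 = iota 0 n ++ [:: n] by rewrite -addn1 iotaD.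
rewrite count_cat /= addn0; case Pn: (P n); last first.
  by rewrite addn0 ltnS leq_eqVlt => /orP[/eqP->|/IH//]; rewrite Pn ltnNge count_iota_le.
have -> : count P (iota 0 n) = n.
  apply/eqP; rewrite -[X in _ == X](size_iota 0 n) -all_count; apply/allP => i.
  by rewrite mem_iota => /andP[_ /ltnW/P_down]; apply.
by rewrite addn1 ltnS => jn; rewrite jn (P_down jn Pn).
Qed.

Lemma big_count_iota_down (V : nmodType) (f : nat -> V) n :
  \sum_(j < n | P j) f j = \sum_(j < count P (iota 0 n)) f j.
Proof.
rewrite (big_ord_widen n (fun j => f j) (count_iota_le n)).
by apply: eq_bigl => j; rewrite (count_iota_down (ltn_ord j)).
Qed.

End DownwardClosedCount.

Lemma ler_nat_down (R : numDomainType) (c : R) i j : (i <= j)%N -> j%:R <= c -> i%:R <= c.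
Proof. by move=> ij; apply: le_trans; rewrite ler_nat. Qed.

Lemma ltr_nat_down (R : numDomainType) (c : R) i j : (i <= j)%N -> j%:R < c -> i%:R < c.
Proof. by move=> ij; apply: le_lt_trans; rewrite ler_nat. Qed.

Lemma count_iota_threshold (R : realFieldType) (c : R) (P : pred nat) n :
  (forall j, j%:R < c -> P j) -> (forall j, P j -> j%:R <= c) -> 0 <= c <= n%:R ->
  c <= (count P (iota 0 n))%:R <= c + 1.
Proof.
move=> P_lt P_le /andP[c0 cn].
have P_down i j : (i <= j)%N -> P j -> P i.
  rewrite leq_eqVlt => /orP[/eqP-> //|ij Pj]; apply: P_lt.
  by apply: lt_le_trans (P_le _ Pj); rewrite ltr_nat.
have Nn := count_iota_le P n; set N := count _ _ in Nn *.
apply/andP; split.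
  have [Nlt|] := ltnP N n; last by move=> nN; rewrite (@anti_leq N n) ?Nn.
  have : ~~ P N by rewrite (count_iota_down P_down Nlt) ltnn.
  by apply: contraR; rewrite -ltNge; apply: P_lt.
have [->|N0] := posnP N; first exact: addr_ge0.
have NN : (N.-1 < N)%N by rewrite ltn_predL.
have : P N.-1 by rewrite (count_iota_down P_down (leq_trans NN Nn)).
by move/P_le; rewrite -(prednK N0) -natr1 lerD2r.
Qed.

Lemma p_e_double_sum (R : realType) (g d : R) m : (0 < m)%N ->
  p_e g d (2 * m) =
  (\sum_(j < 2 * m | ((1 - d) * (2 * m)%:R <= j%:R) && (j%:R <= (1 - g) * (2 * m)%:R))
     peven R j) / ((2 * m)%:R * wallis R m).
Proof.
move=> m_gt0; rewrite /wallis; set k := (2 * m).-1.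
have Ek : (2 * m = k.+1)%N by rewrite prednK // muln_gt0.
have k_odd : odd k by move: (odd_double m); rewrite -mul2n Ek /= => /negbFE.
have e_gt0 : (0 < eperm k.+1)%N by rewrite -Ek eperm_even_gt0.
rewrite Ek /p_e.
rewrite (card_all_cycles_even_ord0 k (fun L => (g * k.+1%:R <= L%:R) && (L%:R <= d * k.+1%:R))).
rewrite card_all_cycles_even natr_sum !mulr_suml.
(* Reindex by the number [j] of points off the cycle through [ord0]. *)
rewrite (reindex_inj rev_ord_inj) [in RHS]big_mkcond; apply: eq_bigr => j _.
have jk : (j <= k)%N by rewrite -ltnS.
have -> : nat_of_ord (rev_ord j) = (k - j)%N by rewrite /= subSS.
have -> : (k - j).+1 = (k.+1 - j)%N by rewrite subSn.
have kkj : (k - (k - j) = j)%N by rewrite subKn.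
have -> : (g * k.+1%:R <= (k.+1 - j)%:R) && ((k.+1 - j)%:R <= d * k.+1%:R) =
    ((1 - d) * k.+1%:R <= j%:R) && (j%:R <= (1 - g) * k.+1%:R).
  by rewrite natrB ?(leq_trans jk) //; apply/andP/andP => -[h1 h2]; split; lra.
case: (_ && _); last by rewrite !mul0r.
rewrite 2!natrM mul1r; case kj_odd: (odd (k - j)).
  by rewrite mul1r eperm_ffact_ratio ?leq_subr // kkj.
rewrite !mul0r /peven eperm_odd ?mul0r //.
by rewrite -kkj oddB ?leq_subr // k_odd kj_odd.
Qed.

Lemma p_eE (R : realType) (g d : R) m : (0 < m)%N -> g <= d ->
  p_e g d (2 * m) =
  (peven_sum R (count [pred j : nat | j%:R <= (1 - g) * (2 * m)%:R] (iota 0 (2 * m)))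
   - peven_sum R (count [pred j : nat | j%:R < (1 - d) * (2 * m)%:R] (iota 0 (2 * m))))
  / ((2 * m)%:R * wallis R m).
Proof.
move=> m_gt0 gd; rewrite p_e_double_sum //; congr (_ / _).
set c1 := (1 - g) * _; set c2 := (1 - d) * _.
have c21 : c2 <= c1 by rewrite ler_wpM2r ?ler0n // lerD2l lerN2.
rewrite /peven_sum -(big_count_iota_down (@ler_nat_down R c1)).
rewrite -(big_count_iota_down (@ltr_nat_down R c2)).
rewrite [X in _ = X - _](bigID (fun j : 'I__ => j%:R < c2)) /=.
rewrite [X in _ = X + _ - _](eq_bigl (fun j : 'I__ => j%:R < c2)); last first.
  by move=> j /=; case: ltP => h; rewrite ?andbF // andbT (le_trans (ltW h) c21).
rewrite addrAC subrr add0r.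
by apply: eq_bigl => j; rewrite -leNgt andbC.
Qed.

Lemma peven_sum_count_close (R : realType) (c : R) (P : pred nat) m :
  (0 < m)%N -> 0 <= c <= 1 ->
  (forall j, j%:R < c * (2 * m)%:R -> P j) -> (forall j, P j -> j%:R <= c * (2 * m)%:R) ->
  `|peven_sum R (count P (iota 0 (2 * m))) / ((2 * m)%:R * wallis R m) - Num.sqrt c|
    <= Num.sqrt (2 / m%:R).
Proof.
move=> m_gt0 /andP[c0 c1] P_lt P_le.
apply: peven_sum_ratio_close; rewrite ?c0 ?c1 ?count_iota_le //.
apply: count_iota_threshold => //; rewrite mulr_ge0 ?ler0n //=.
by rewrite ler_piMl ?ler0n.
Qed.

Lemma p_e_close (R : realType) (g d : R) m : (0 < m)%N -> 0 <= g -> g <= d -> d <= 1 ->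
  `|p_e g d (2 * m) - (Num.sqrt (1 - g) - Num.sqrt (1 - d))| <= 2 * Num.sqrt (2 / m%:R).
Proof.
move=> m_gt0 g0 gd d1; rewrite p_eE // mulrBl.
have cg : 0 <= 1 - g <= 1 by apply/andP; split; lra.
have cd : 0 <= 1 - d <= 1 by apply/andP; split; lra.
set A := peven_sum R (count [pred j : nat | j%:R <= _] _) / _.
set B := peven_sum R (count [pred j : nat | j%:R < _] _) / _.
have hA : `|A - Num.sqrt (1 - g)| <= Num.sqrt (2 / m%:R).
  by apply: peven_sum_count_close => // j /ltW.
have hB : `|B - Num.sqrt (1 - d)| <= Num.sqrt (2 / m%:R).
  by apply: peven_sum_count_close => // j /ltW.
rewrite (_ : A - B - _ = (A - Num.sqrt (1 - g)) - (B - Num.sqrt (1 - d))); last by ring.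
by rewrite mulr2n mulrDl mul1r; apply: le_trans (ler_normB _ _) (lerD hA hB).
Qed.

Local Open Scope classical_set_scope.

Theorem theorem3p5 (R : realType) (gamma delta : R)
  (h0g : 0 <= gamma) (hgd : gamma <= delta) (hd1 : delta <= 1) :
  ((fun m : nat => p_e gamma delta (2 * m)%N) : nat -> R^o) @ \oo -->
    (Num.sqrt (1 - gamma) - Num.sqrt (1 - delta) : R^o).
Proof.
apply/cvgrPdistC_le => eps eps_gt0; near=> m.
have m_gt0 : (0 < m)%N by near: m; exact: nbhs_infty_gt.
have m_big : 8 / eps ^+ 2 <= m%:R :> R by near: m; exact: nbhs_infty_ger.
apply: le_trans (p_e_close m_gt0 h0g hgd hd1) _.
have e2_ge0 : 0 <= eps / 2 by lra.
rewrite -ler_pdivlMl // [_ * eps]mulrC -(ger0_norm e2_ge0) -sqrtr_sqr ler_sqrt ?sqr_ge0 //.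
have m0 : 0 < m%:R :> R by rewrite ltr0n.
rewrite ler_pdivrMr // expr_div_n; move: m_big; rewrite ler_pdivrMr ?exprn_gt0 //.
nra.
Unshelve. all: by end_near.
Qed.
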